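(* Let $\tau=\{(\lambda_i,\nu_i,a_i)\}_{i=1}^k$ satisfy $\lambda_i\ge0$, $\sum_i\lambda_i=1$, $\nu_i\in\Delta(\Omega)$, $a_i\in A$, and $\sum_i\lambda_i\nu_i=\mu_0$. Let $\nu_i'\in\Delta(\Omega)$ be such that $\|\nu_i'-\nu_i\|_2\le\epsilon$ whenever $\nu_i'\neq\nu_i$, and $\sum_{i:\nu_i'\ne\nu_i}\lambda_i\le p$. Then there exist weights $\hat\lambda_i\ge0$, $\hat\lambda_+\ge0$ with $\sum_i\hat\lambda_i+\hat\lambda_+=1$, and a posterior $\nu_+$ with $\|\nu_+-\mu_0\|_2\le\delta/2$ (so $\nu_+\in\Delta(\Omega)\cap R$), such that the augmented scheme $\hat\tau=\{(\hat\lambda_i,\nu_i',a_i)\}_{i}\cup\{(\hat\lambda_+,\nu_+,a_0)\}$ satisfies $\sum_i\hat\lambda_i\nu_i'+\hat\lambda_+\nu_+=\mu_0$ and $$|U_S(\tau)-U_S(\hat\tau)|\le U_{\max}\Big(\sqrt{|\Omega|}+\frac4\delta\Big)p\,\epsilon.$$ If $\sum_i\lambda_i\nu_i'=\mu_0$, one may take $\hat\lambda_+=0$.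
   Context: Finite $\Omega$ and $A$, prior $\mu_0\in\Delta(\Omega)$, sender utility $u_S:A\times\Omega\to\mathbb R$, and $U_{\max}=\max_{a,\omega}|u_S(a,\omega)|$. For a finite list of triples $\sigma=\{(w_j,\nu_j,a_j)\}$, the sender value is $U_S(\sigma)=\sum_jw_j\sum_\omega\nu_j(\omega)u_S(a_j,\omega)$. Fix an action $a_0\in A$, a set $R\subseteq\Delta(\Omega)$, and $\delta>0$ such that every $\nu\in\mathbb R^\Omega$ with $\mathbf 1^\top\nu=1$ and $\|\nu-\mu_0\|_2\le\delta/2$ lies in $\Delta(\Omega)\cap R$. In the paper, $R$ is the interval-safe default-action region and $\delta=\delta_{\mu_0}$. *)

From mathcomp Require Import all_boot all_order all_algebra.
Set Implicit Arguments. Unset Strict Implicit. Unset Printing Implicit Defensive.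
Import Order.TTheory GRing.Theory Num.Theory.
Local Open Scope ring_scope.

Section Defs.
Variables (R : rcfType) (Omega A : finType).

Definition isDist (nu : {ffun Omega -> R}) : Prop :=
  (forall w, 0 <= nu w) /\ \sum_(w : Omega) nu w = 1.

Definition dist2 (x y : {ffun Omega -> R}) : R :=
  Num.sqrt (\sum_(w : Omega) (x w - y w) ^+ 2).

Definition Umax (uS : A -> Omega -> R) : R :=
  \big[Num.max/0]_(a : A) \big[Num.max/0]_(w : Omega) `|uS a w|.

Definition US (uS : A -> Omega -> R) (s : seq (R * {ffun Omega -> R} * A)) : R :=
  \sum_(t <- s) t.1.1 * \sum_(w : Omega) t.1.2 w * uS t.2 w.

Definition scheme (k : nat) (lam : 'I_k -> R) (nu : 'I_k -> {ffun Omega -> R})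
  (a : 'I_k -> A) : seq (R * {ffun Omega -> R} * A) :=
  [seq (lam i, nu i, a i) | i <- enum 'I_k].
End Defs.

From mathcomp Require Import all_boot all_order all_algebra.
From mathcomp Require Import ring lra.
Import Order.TTheory GRing.Theory Num.Theory.
Set Implicit Arguments. Unset Strict Implicit. Unset Printing Implicit Defensive.
Local Open Scope ring_scope.

(* The defect d := mu0 - sum_i lam_i nu'_i = sum_i lam_i (nu_i - nu'_i) has total mass 0, and by
   the triangle inequality ||d||_2 <= p eps.  Mixing (1 - t) of the perturbed scheme with
   t = 2||d|| / (delta + 2||d||) of the posterior nu_+ = mu0 + delta / (2||d||) d restores Bayes
   plausibility, and nu_+ lies at distance delta/2 from mu0.  The value changes by
   at most Umax sqrt|Omega| p eps on the perturbed posteriors (an l1 bound through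
   Cauchy-Schwarz) plus t * 2 Umax <= (4 / delta) Umax p eps for the added posterior. *)

Section L2Norm.
Variables (R : rcfType) (I : finType).
Implicit Types (f g : I -> R).

Definition l2norm f : R := Num.sqrt (\sum_i f i ^+ 2).

Lemma l2norm_ge0 f : 0 <= l2norm f.
Proof. exact: sqrtr_ge0. Qed.

Lemma sumr_sqr_ge0 f : 0 <= \sum_i f i ^+ 2.
Proof. by apply: sumr_ge0 => i _; apply: sqr_ge0. Qed.

Lemma l2norm_sqr f : l2norm f ^+ 2 = \sum_i f i ^+ 2.
Proof. by rewrite sqr_sqrtr // sumr_sqr_ge0. Qed.

Lemma eq_l2norm f g : f =1 g -> l2norm f = l2norm g.
Proof. by move=> fg; rewrite /l2norm; under eq_bigr => i _ do rewrite fg. Qed.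

Lemma sumr_sqr_eq0 {f} : \sum_i f i ^+ 2 = 0 -> forall i, f i = 0.
Proof.
move=> /psumr_eq0P f0 i.
by apply/eqP; rewrite -sqrf_eq0; apply/eqP/f0 => // j _; apply: sqr_ge0.
Qed.

Lemma l2norm_eq0 {f} : l2norm f = 0 -> forall i, f i = 0.
Proof. by move=> f0; apply: sumr_sqr_eq0; rewrite -l2norm_sqr f0 expr0n. Qed.

Lemma l2normZ (c : R) f : l2norm (fun i => c * f i) = `|c| * l2norm f.
Proof.
rewrite /l2norm -sqrtr_sqr -sqrtrM ?sqr_ge0 // mulr_sumr.
by congr Num.sqrt; apply: eq_bigr => i _; rewrite exprMn.
Qed.

Lemma cauchy_schwarz_sqr f g :
  (\sum_i f i * g i) ^+ 2 <= (\sum_i f i ^+ 2) * (\sum_i g i ^+ 2).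
Proof.
set a := \sum_i f i ^+ 2; set b := \sum_i f i * g i; set c := \sum_i g i ^+ 2.
have a0 : 0 <= a by apply: sumr_sqr_ge0.
have [a_eq0|a_neq0] := eqVneq a 0.
  have f0 := sumr_sqr_eq0 a_eq0.
  rewrite /b big1 ?expr0n ?a_eq0 ?mul0r // => i _.
  by rewrite f0 mul0r.
(* Expanding the nonnegative sum of (a g_i - b f_i)^2 gives a (a c - b^2). *)
have expand : \sum_i (a * g i - b * f i) ^+ 2 = a * (a * c - b ^+ 2).
  rewrite (eq_bigr (fun i => a ^+ 2 * g i ^+ 2 - 2 * a * b * (f i * g i) + b ^+ 2 * f i ^+ 2));
    last by move=> i _; ring.
  by rewrite !big_split /= sumrN -!mulr_sumr -/a -/b -/c; ring.
have : 0 <= a * (a * c - b ^+ 2) by rewrite -expand sumr_sqr_ge0.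
by rewrite pmulr_rge0 ?lt_def ?a_neq0 // subr_ge0.
Qed.

Lemma cauchy_schwarz f g : `|\sum_i f i * g i| <= l2norm f * l2norm g.
Proof.
rewrite -sqrtr_sqr -sqrtrM ?sumr_sqr_ge0 //.
exact/ler_wsqrtr/cauchy_schwarz_sqr.
Qed.

Lemma sum_norm_le_l2norm f : \sum_i `|f i| <= Num.sqrt #|I|%:R * l2norm f.
Proof.
have := cauchy_schwarz (fun _ => 1) (fun i => `|f i|); rewrite /l2norm /=.
have -> : \sum_(i : I) (1 : R) ^+ 2 = #|I|%:R.
  by rewrite -sumr_const; apply: eq_bigr => i _; rewrite expr1n.
have -> : \sum_i `|f i| ^+ 2 = \sum_i f i ^+ 2.
  by apply: eq_bigr => i _; rewrite real_normK ?num_real.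
under eq_bigr do rewrite mul1r.
by rewrite ger0_norm // sumr_ge0.
Qed.

Lemma sqr_le_mul_le (x y : R) : 0 <= x -> 0 <= y -> x ^+ 2 <= y * x -> x <= y.
Proof. by move=> x0 y0; nra. Qed.

(* With x := sum_j lam_j g_j, ||x||^2 = sum_j lam_j <g_j, x> <= (sum_j lam_j ||g_j||) ||x||. *)
Lemma l2norm_sum_le (J : finType) (lam : J -> R) (g : J -> I -> R) :
  (forall j, 0 <= lam j) ->
  l2norm (fun i => \sum_j lam j * g j i) <= \sum_j lam j * l2norm (g j).
Proof.
move=> lam0; set x := fun i => _.
apply: sqr_le_mul_le; first exact: l2norm_ge0.
  by apply: sumr_ge0 => j _; rewrite mulr_ge0 ?l2norm_ge0.
have -> : l2norm x ^+ 2 = \sum_j lam j * \sum_i g j i * x i.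
  rewrite l2norm_sqr; under eq_bigr => i _ do rewrite expr2 {1}/x mulr_suml.
  rewrite exchange_big; apply: eq_bigr => j _ /=; rewrite mulr_sumr.
  by apply: eq_bigr => i _; rewrite mulrA.
rewrite mulr_suml; apply: ler_sum => j _; rewrite -mulrA ler_wpM2l //.
exact: le_trans (ler_norm _) (cauchy_schwarz _ _).
Qed.

End L2Norm.

Lemma sum_weighted_support_le (R : realDomainType) (J : finType) (P : pred J)
    (lam f : J -> R) (eps : R) :
  (forall j, 0 <= lam j) -> (forall j, ~~ P j -> f j = 0) -> (forall j, P j -> f j <= eps) ->
  \sum_j lam j * f j <= eps * \sum_(j | P j) lam j.
Proof.
move=> lam0 fP0 fPle; rewrite (bigID P) /= [X in _ + X]big1 ?addr0 => [|j /fP0 ->].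
  by rewrite mulr_sumr; apply: ler_sum => j Pj; rewrite mulrC ler_wpM2r ?fPle.
by rewrite mulr0.
Qed.

Lemma norm_convex_le (R : realDomainType) (J : finType) (lam x : J -> R) (M : R) :
  (forall j, 0 <= lam j) -> \sum_j lam j = 1 -> (forall j, `|x j| <= M) ->
  `|\sum_j lam j * x j| <= M.
Proof.
move=> lam0 lam1 xM; apply: le_trans (ler_norm_sum _ _ _) _.
rewrite -[M]mul1r -lam1 mulr_suml; apply: ler_sum => j _.
by rewrite normrM ger0_norm // ler_wpM2l.
Qed.

Lemma dist2E (R : rcfType) (Omega : finType) (x y : {ffun Omega -> R}) :
  dist2 x y = l2norm (fun w => x w - y w).
Proof. by []. Qed.

Lemma dist2C (R : rcfType) (Omega : finType) (x y : {ffun Omega -> R}) :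
  dist2 x y = dist2 y x.
Proof. by rewrite /dist2; under eq_bigr do rewrite -sqrrN opprB. Qed.

Section Payoff.
Variables (R : rcfType) (Omega A : finType) (uS : A -> Omega -> R).

Definition payoff (nu : {ffun Omega -> R}) (b : A) : R := \sum_w nu w * uS b w.

Lemma Umax_ge_norm b w : `|uS b w| <= Umax uS.
Proof.
apply: le_trans (le_bigmax _ (fun b => \big[Num.max/0]_w `|uS b w|) b).
exact: (le_bigmax _ (fun w => `|uS b w|) w).
Qed.

Lemma Umax_ge0 : 0 <= Umax uS.
Proof.
apply: (big_ind (fun x => 0 <= x)) => // [x y x0 y0|b _]; first by rewrite le_max x0.
by apply: (big_ind (fun x => 0 <= x)) => // x y x0 y0; rewrite le_max x0.
Qed.

Lemma norm_payoff_le nu b : isDist nu -> `|payoff nu b| <= Umax uS.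
Proof. by case=> nu0 nu1; apply: norm_convex_le => // w; apply: Umax_ge_norm. Qed.

Lemma norm_payoffB_le nu nu' b :
  `|payoff nu b - payoff nu' b| <= Umax uS * Num.sqrt #|Omega|%:R * dist2 nu nu'.
Proof.
rewrite /payoff -sumrB (eq_bigr (fun w => (nu w - nu' w) * uS b w)) => [|w _]; last first.
  by rewrite mulrBl.
apply: le_trans (ler_norm_sum _ _ _) _; rewrite -mulrA.
apply: le_trans (_ : \sum_w `|nu w - nu' w| * Umax uS <= _).
  by apply: ler_sum => w _; rewrite normrM ler_wpM2l ?Umax_ge_norm.
by rewrite -mulr_suml mulrC ler_wpM2l ?Umax_ge0 ?sum_norm_le_l2norm.
Qed.

Lemma US_scheme k (lam : 'I_k -> R) (nu : 'I_k -> {ffun Omega -> R}) (a : 'I_k -> A) :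
  US uS (scheme lam nu a) = \sum_i lam i * payoff (nu i) (a i).
Proof. by rewrite /US /scheme big_map big_enum. Qed.

Lemma US_rcons s l nu b : US uS (rcons s (l, nu, b)) = US uS s + l * payoff nu b.
Proof. by rewrite /US -cats1 big_cat big_seq1. Qed.

End Payoff.

Lemma bayes_restoration (R : rcfType) (Omega : finType) (mu0 : {ffun Omega -> R})
    (d : Omega -> R) (delta : R) :
  \sum_w mu0 w = 1 -> \sum_w d w = 0 -> 0 < delta ->
  exists t (nup : {ffun Omega -> R}),
    [/\ 0 <= t <= 1, t * delta <= 2 * l2norm d, \sum_w nup w = 1,
        dist2 nup mu0 <= delta / 2
      & forall w, (1 - t) * (mu0 w - d w) + t * nup w = mu0 w].
Proof.
move=> mu0_sum1 d_sum0 delta_gt0; set D := l2norm d.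
have [D_eq0|D_neq0] := eqVneq D 0.
  exists 0, mu0; split => //; first by rewrite lexx ler01.
  - by rewrite mul0r D_eq0 mulr0.
  - rewrite /dist2 big1 ?sqrtr0 ?divr_ge0 ?ltW // => w _.
    by rewrite subrr expr0n.
  - by move=> w; rewrite (l2norm_eq0 D_eq0 w) subr0 mul0r addr0 subr0 mul1r.
have D_gt0 : 0 < D by rewrite lt_def D_neq0 l2norm_ge0.
have den_gt0 : 0 < delta + 2 * D by rewrite addr_gt0 ?mulr_gt0.
pose c := delta / (2 * D).
exists (2 * D / (delta + 2 * D)), [ffun w => mu0 w + c * d w].
set t := _ / _; have t_den : t * (delta + 2 * D) = 2 * D by rewrite divfK ?gt_eqF.
have t_ge0 : 0 <= t by rewrite divr_ge0 ?ltW ?mulr_gt0.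
split.
- by rewrite t_ge0 /=; nra.
- by nra.
- by under eq_bigr do rewrite ffunE; rewrite big_split /= -mulr_sumr d_sum0 mulr0 addr0.
- rewrite dist2E (@eq_l2norm _ _ _ (fun w => c * d w)) => [|w]; last by rewrite ffunE addrC addKr.
  have c_ge0 : 0 <= c by rewrite divr_ge0 ?mulr_ge0 ?ltW.
  rewrite l2normZ ger0_norm // -/D (_ : c * D = delta / 2) // /c.
  by field.
- by move=> w; rewrite ffunE /t /c; field; rewrite D_neq0 gt_eqF.
Qed.

Section Perturbation.
Variables (R : rcfType) (Omega A : finType) (uS : A -> Omega -> R) (mu0 : {ffun Omega -> R}).
Variables (k : nat) (lam : 'I_k -> R) (nu nu' : 'I_k -> {ffun Omega -> R}) (a : 'I_k -> A).
Variables (eps p : R).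
Hypotheses (lam_ge0 : forall i, 0 <= lam i) (lam_sum1 : \sum_i lam i = 1).
Hypotheses (nu_dist : forall i, isDist (nu i)) (nu'_dist : forall i, isDist (nu' i)).
Hypothesis bayes : forall w, \sum_i lam i * nu i w = mu0 w.
Hypothesis eps_ge0 : 0 <= eps.
Hypothesis nu'_close : forall i, nu' i != nu i -> dist2 (nu' i) (nu i) <= eps.
Hypothesis changed_mass : \sum_(i | nu' i != nu i) lam i <= p.

Definition defect (w : Omega) : R := mu0 w - \sum_i lam i * nu' i w.

Lemma defectE w : defect w = \sum_i lam i * (nu i w - nu' i w).
Proof. by rewrite /defect -bayes -sumrB; apply: eq_bigr => i _; rewrite mulrBr. Qed.

Lemma sum_defect : \sum_w defect w = 0.
Proof.
under eq_bigr do rewrite defectE; rewrite exchange_big big1 // => i _ /=.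
by rewrite -mulr_sumr sumrB (proj2 (nu_dist i)) (proj2 (nu'_dist i)) subrr mulr0.
Qed.

Lemma l2norm_defect_le : l2norm defect <= p * eps.
Proof.
rewrite (eq_l2norm defectE).
apply: le_trans (l2norm_sum_le (fun i w => nu i w - nu' i w) lam_ge0) _.
rewrite mulrC; apply: le_trans (ler_wpM2l eps_ge0 changed_mass).
apply: sum_weighted_support_le => // i.
  rewrite negbK => /eqP ->; rewrite /l2norm big1 ?sqrtr0 // => w _.
  by rewrite subrr expr0n.
by move/nu'_close; rewrite dist2C.
Qed.

Lemma US_mixture_gap t nup b : 0 <= t -> isDist nup ->
  `|US uS (scheme lam nu a)
    - US uS (rcons (scheme (fun i => (1 - t) * lam i) nu' a) (t, nup, b))|
    <= Umax uS * Num.sqrt #|Omega|%:R * (p * eps) + t * (2 * Umax uS).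
Proof.
move=> t_ge0 nup_dist; rewrite US_rcons !US_scheme.
set P := fun i => payoff uS (nu i) (a i); set P' := fun i => payoff uS (nu' i) (a i).
set mean' := \sum_i lam i * P' i.
have -> : \sum_i lam i * P i - (\sum_i (1 - t) * lam i * P' i + t * payoff uS nup b)
    = \sum_i lam i * (P i - P' i) + t * (mean' - payoff uS nup b).
  have -> : \sum_i (1 - t) * lam i * P' i = (1 - t) * mean'.
    by rewrite /mean' mulr_sumr; apply: eq_bigr => i _; rewrite mulrA.
  have -> : \sum_i lam i * (P i - P' i) = \sum_i lam i * P i - mean'.
    by rewrite /mean' -sumrB; apply: eq_bigr => i _; rewrite mulrBr.
  by ring.
apply: le_trans (ler_normD _ _) _; apply: lerD.
  apply: le_trans (ler_norm_sum _ _ _) _.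
  rewrite (eq_bigr (fun i => lam i * `|P i - P' i|)) => [|i _]; last first.
    by rewrite normrM ger0_norm.
  have gap_ge0 : 0 <= Umax uS * Num.sqrt #|Omega|%:R * eps.
    by rewrite !mulr_ge0 ?sqrtr_ge0 ?Umax_ge0.
  rewrite [p * eps]mulrC mulrA; apply: le_trans (ler_wpM2l gap_ge0 changed_mass).
  apply: sum_weighted_support_le => // i.
    by rewrite negbK /P /P' => /eqP ->; rewrite subrr normr0.
  move=> /nu'_close close; apply: le_trans (norm_payoffB_le _ _ _ _) _.
  by rewrite dist2C ler_wpM2l ?mulr_ge0 ?sqrtr_ge0 ?Umax_ge0.
rewrite normrM ger0_norm // ler_wpM2l //; apply: le_trans (ler_normB _ _) _.
rewrite mulr2n mulrDl mul1r; apply: lerD; last exact: norm_payoff_le.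
by apply: norm_convex_le => // i; apply: norm_payoff_le.
Qed.

End Perturbation.

Theorem lemmaD2 (R : rcfType) (Omega A : finType)
  (mu0 : {ffun Omega -> R}) (uS : A -> Omega -> R)
  (a0 : A) (Rset : {ffun Omega -> R} -> Prop) (delta : R)
  (Hmu0 : isDist mu0)
  (Hdelta : 0 < delta)
  (HR : forall nu : {ffun Omega -> R}, \sum_(w : Omega) nu w = 1 ->
          dist2 nu mu0 <= delta / 2 -> isDist nu /\ Rset nu)
  (k : nat) (lam : 'I_k -> R) (nu : 'I_k -> {ffun Omega -> R}) (a : 'I_k -> A)
  (Hlam0 : forall i, 0 <= lam i)
  (Hlam1 : \sum_(i < k) lam i = 1)
  (Hnu : forall i, isDist (nu i))
  (Hbayes : forall w, \sum_(i < k) lam i * nu i w = mu0 w)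
  (nu' : 'I_k -> {ffun Omega -> R}) (eps p : R)
  (Heps0 : 0 <= eps)
  (Hnu' : forall i, isDist (nu' i))
  (Heps : forall i, nu' i != nu i -> dist2 (nu' i) (nu i) <= eps)
  (Hp : \sum_(i < k | nu' i != nu i) lam i <= p) :
  exists (lamh : 'I_k -> R) (lamp : R) (nup : {ffun Omega -> R}),
    [/\ (forall i, 0 <= lamh i) /\ 0 <= lamp /\ \sum_(i < k) lamh i + lamp = 1,
        dist2 nup mu0 <= delta / 2 /\ (isDist nup /\ Rset nup),
        (forall w, \sum_(i < k) lamh i * nu' i w + lamp * nup w = mu0 w),
        `|US uS (scheme lam nu a) - US uS (rcons (scheme lamh nu' a) (lamp, nup, a0))|
           <= Umax uS * (Num.sqrt (#|Omega|%:R) + 4 / delta) * p * eps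
      & ((forall w, \sum_(i < k) lam i * nu' i w = mu0 w) -> lamp = 0)].
Proof.
have [t [nup [/andP[t_ge0 t_le1] t_delta nup_sum1 nup_near mixing]]] :=
  bayes_restoration (proj2 Hmu0) (sum_defect Hnu Hnu' Hbayes) Hdelta.
have [nup_dist nup_R] := HR nup nup_sum1 nup_near.
have t_small : t <= 2 * (p * eps) / delta.
  rewrite ler_pdivlMr //; apply: le_trans t_delta _.
  by rewrite ler_pM2l // (l2norm_defect_le Hlam0 Hbayes Heps0 Heps Hp).
exists (fun i => (1 - t) * lam i), t, nup; split => //.
- split=> [i|]; first by rewrite mulr_ge0 ?subr_ge0.
  by rewrite t_ge0 -mulr_sumr Hlam1 mulr1 subrK.
- move=> w; rewrite -[RHS]mixing /defect subKr mulr_sumr.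
  by congr (_ + _); apply: eq_bigr => i _; rewrite mulrA.
- apply: le_trans (US_mixture_gap uS a Hlam0 Hlam1 Hnu' Heps0 Heps Hp a0 t_ge0 nup_dist) _.
  have -> : Umax uS * (Num.sqrt #|Omega|%:R + 4 / delta) * p * eps
      = Umax uS * Num.sqrt #|Omega|%:R * (p * eps) + 2 * (p * eps) / delta * (2 * Umax uS).
    by ring.
  by rewrite lerD2l ler_wpM2r // mulr_ge0 ?Umax_ge0.
- move=> bayes'; have defect0 : l2norm (defect mu0 lam nu') = 0.
    by rewrite /l2norm big1 ?sqrtr0 // => w _; rewrite /defect bayes' subrr expr0n.
  move: t_delta; rewrite defect0 mulr0 pmulr_lle0 // => t_le0.
  by apply/le_anti; rewrite t_le0 t_ge0.
Qed.
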